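(* Let $n\ge2$, let $A\in\mathbb{R}^{n\times n}$ be Metzler, output unstable and nonsingular, $b_0\in\mathbb{R}^n_{\ge0}$, $r>0$, $g_0:=-e_n^TA^{-1}b_0$, $g_n:=-e_n^TA^{-1}e_n$, $u_*:=(g_0-r)/(g_nr)$. Then $\bar A:=A-u_*e_ne_n^T$ is Hurwitz stable if and only if $g_0<0$.
   Context: $S:=[e_1\ \cdots\ e_{n-1}]$, $e_i$ standard basis vectors. Metzler: all off-diagonal entries nonnegative. Hurwitz stable: all eigenvalues have negative real part. $M$ is output unstable if $S^TMS$ is Hurwitz stable and $e_n^TMe_n>0$. *)

(* real matrices over an arbitrary real closed field R,
   eigenvalues taken in the algebraic closure R[i] (complex R). *)
From HB Require Import structures.
From mathcomp Require Import all_boot all_order all_algebra.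
From mathcomp Require Import complex.
Set Implicit Arguments. Unset Strict Implicit. Unset Printing Implicit Defensive.
Import Order.TTheory GRing.Theory Num.Theory.
Local Open Scope ring_scope.

Definition metzler (R : numDomainType) (k : nat) (M : 'M[R]_k) : Prop :=
  forall i j : 'I_k, i != j -> 0 <= M i j.

Definition eigenvalue_C (R : rcfType) (k : nat) (M : 'M[R]_k) (z : R[i]) : Prop :=
  root (map_poly (fun x : R => (x%:C)%C) (char_poly M)) z.

Definition hurwitz (R : rcfType) (k : nat) (M : 'M[R]_k) : Prop :=
  forall z : R[i], eigenvalue_C M z -> Re z < 0.

(* Matrices are of size n = m.+1, so that the last index e_n exists. *)
Definition e_last (R : pzRingType) (m : nat) : 'cV[R]_m.+1 := delta_mx ord_max 0.

Definition Smx (R : pzRingType) (m : nat) : 'M[R]_(m.+1, m) :=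
  \matrix_(i < m.+1, j < m) (i == widen_ord (leqnSn m) j)%:R.

Definition output_unstable (R : rcfType) (m : nat) (M : 'M[R]_m.+1) : Prop :=
  hurwitz ((Smx R m)^T *m M *m Smx R m) /\
  0 < ((e_last R m)^T *m M *m e_last R m) 0 0.

From HB Require Import structures.
From mathcomp Require Import all_boot all_order all_algebra.
From mathcomp Require Import complex polyrcf ring lra.
Import Order.TTheory GRing.Theory Num.Theory.
Set Implicit Arguments. Unset Strict Implicit. Unset Printing Implicit Defensive.
Local Open Scope ring_scope.

(* Write A = [C a; b d] with C = S^T A S. For a Metzler matrix M, Hurwitz
   stability, the existence of u > 0 with M u < 0, and positivity of
   det (t - M) on [0, +oo[ are equivalent. The determinant condition passes
   from M to its leading block C: if the largest real eigenvalue y of C were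
   nonnegative, then for t > y the matrix (t - C)^-1 would be nonnegative, so
   det (t - M) <= det (t - C) (t - d), which tends to 0 as t decreases to y.
   Conversely a vector u for C extends to one for M as soon as the Schur
   complement d - b C^-1 a is negative. So a Metzler matrix with Hurwitz
   leading block is Hurwitz iff its Schur complement is negative. Passing from
   A to A - u* e_n e_n^T only replaces d by d - u*; since g_n = -1/s for the
   Schur complement s >= d > 0 of A, the new complement s - u* equals
   s g_0 / r, which has the sign of g_0. *)

Lemma transport_castmx (T : Type) (P : forall n, 'M[T]_n -> Prop) n n'
    (e : n = n') (M : 'M_n) :
  P n M -> P n' (castmx (e, e) M).
Proof. by case: n' / e; rewrite castmx_id. Qed.

Lemma det_castmx (R : comNzRingType) n n' (e : n = n') (M : 'M[R]_n) :
  \det (castmx (e, e) M) = \det M.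
Proof. by case: n' / e; rewrite castmx_id. Qed.

Lemma horner_char_poly (R : comNzRingType) k (M : 'M[R]_k) t :
  (char_poly M).[t] = \det (t%:M - M).
Proof.
rewrite /char_poly -[_.[t]]/(horner_eval t _) -det_map_mx; congr determinant.
apply/matrixP => i j; rewrite !mxE /horner_eval.
by case: (i == j); rewrite /= ?mulr1n ?mulr0n horner_evalE !hornerE.
Qed.

Lemma char_poly_trmx (R : comNzRingType) k (M : 'M[R]_k) :
  char_poly M^T = char_poly M.
Proof.
rewrite /char_poly -det_tr; congr determinant.
by apply/matrixP => i j; rewrite !mxE eq_sym.
Qed.

Section SchurComplement.
Variables (R : comUnitRingType) (k : nat).
Implicit Types (C : 'M[R]_k) (a : 'cV[R]_k) (b : 'rV[R]_k) (d : 'M[R]_1).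

Lemma unitmxN C : (- C \in unitmx) = (C \in unitmx).
Proof. by rewrite -scaleN1r unitmxZ // unitrN1. Qed.

Lemma invmxN C : invmx (- C) = - invmx C.
Proof.
have [uC|nuC] := boolP (C \in unitmx); last by rewrite !invmx_out // inE unitmxN.
by rewrite -scaleN1r invmxZ ?unitmxZ ?unitrN1 // invrN1 scaleN1r.
Qed.

Definition schur_compl C a b d : R := (d - b *m invmx C *m a) 0 0.

Lemma det_block_schur C a b d : C \in unitmx ->
  \det (block_mx C a b d) = \det C * schur_compl C a b d.
Proof.
move=> uC.
have -> : block_mx C a b d = block_mx 1%:M 0 (b *m invmx C) 1%:M *m
                            block_mx C a 0 (d - b *m invmx C *m a).
  rewrite mulmx_block !mul1mx !mul0mx !addr0 ?add0r -mulmxA mulVmx // mulmx1.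
  by rewrite addrC subrK.
by rewrite det_mulmx det_lblock det_ublock !det1 !mul1r det_mx11.
Qed.

Lemma det_shift_block C a b d t : t%:M - C \in unitmx ->
  \det (t%:M - block_mx C a b d) =
  \det (t%:M - C) * (t - d 0 0 - (b *m invmx (t%:M - C) *m a) 0 0).
Proof.
move=> uC.
have -> : t%:M - block_mx C a b d = block_mx (t%:M - C) (- a) (- b) (t%:M - d).
  by rewrite (scalar_mx_block k 1) opp_block_mx add_block_mx !add0r.
rewrite det_block_schur // /schur_compl; congr (_ * _).
by rewrite mulNmx mulmxN mulNmx opprK !mxE eqxx /= mulr1n.
Qed.

Lemma schur_compl_subr C a b d c :
  schur_compl C a b (d - c%:M) = schur_compl C a b d - c.
Proof. by rewrite /schur_compl !mxE eqxx mulr1n; ring. Qed.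

End SchurComplement.

Section PolyRcf.
Variable R : rcfType.
Implicit Type p : {poly R}.

Lemma poly_gt0_above p c :
  0 < lead_coef p -> {in `[c, +oo[, forall x, ~~ root p x} ->
  forall x, c <= x -> 0 < p.[x].
Proof.
move=> lc_gt0 noroot_p x cx.
have := sgp_pinftyP noroot_p; rewrite /sgp_pinfty gtr0_sg //.
by move=> /(_ x); rewrite in_itv /= cx => /(_ isT) /eqP; rewrite sgr_cp0.
Qed.

Lemma poly_last_root p c : 0 < lead_coef p -> p.[c] <= 0 ->
  exists2 y, c <= y & root p y /\ forall t, y < t -> 0 < p.[t].
Proof.
move=> lc_gt0 pc_le0.
have p_neq0 : p != 0 by rewrite -lead_coef_eq0 gt_eqF.
have [n /(_ (Num.max c n))] := poly_pinfty_gt_lc lc_gt0.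
rewrite le_max lexx orbT => /(_ isT) /(le_trans (ltW lc_gt0)) pn_ge0.
have [x0 /andP[cx0 _] rx0] : {x | x \in `[c, Num.max c n] & root p x}.
  by apply: polyrcf.poly_ivt; rewrite ?le_max ?lexx // mulr_le0_ge0.
set B := cauchy_bound p.
have x0B : x0 < B.
  by apply: le_lt_trans (ler_norm x0) _; apply: cauchy_boundP => //; apply/rootP.
case: (prev_rootP p (c - 1) B) => [p0 | y _ py _ noroot_p | _ _ _ noroot_p].
- by rewrite p0 eqxx in p_neq0.
- have x0y : x0 <= y.
    rewrite leNgt; apply/negP => yx0.
    by move: (noroot_p x0); rewrite in_itv /= yx0 x0B rx0 => /(_ isT).
  exists y; first exact: le_trans x0y.
  split; first exact/rootP.
  move=> t yt; apply: (poly_gt0_above lc_gt0 _ (lexx t)) => z.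
  rewrite in_itv andbT => tz; have [zB|Bz] := ltP z B.
    by apply: noroot_p; rewrite in_itv /= zB (lt_le_trans yt).
  by apply: (ge_cauchy_bound p_neq0); rewrite in_itv /= Bz.
- have : x0 \in `]c - 1, B[ by rewrite in_itv /= x0B andbT ltrBlDr ltr_pwDr.
  by move/noroot_p; rewrite rx0.
Qed.

Lemma poly_gt0_right p y : 0 < p.[y] -> exists2 t, y < t & 0 < p.[t].
Proof.
move=> py_gt0; have [e e_gt0 Hcont] := poly_cont y p py_gt0.
exists (y + e / 2); first by rewrite ltrDl divr_gt0.
have /Hcont : `|y + e / 2 - y| < e.
  rewrite addrC addKr ger0_norm ?divr_ge0 ?ltW //.
  by rewrite ltr_pdivrMr // ltr_pMr ?ltr1n.
by rewrite ltr_distl => /andP[+ _]; rewrite subrr.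
Qed.

End PolyRcf.

Section Metzler.
Variable R : realFieldType.

(* x |-> max_i x_i / u_i is then a Lyapunov function of x' = M x. *)
Definition has_lyapunov_vector k (M : 'M[R]_k) :=
  exists2 u : 'cV[R]_k, (forall i, 0 < u i 0) & forall i, (M *m u) i 0 < 0.

Lemma metzler_subr_scalar k (M : 'M[R]_k) t :
  metzler M -> metzler (M - t%:M).
Proof.
by move=> mM i j ij; rewrite !mxE (negPf ij) mulr0n subr0; apply: mM.
Qed.

Lemma metzler_block_parts k (C : 'M[R]_k) (a : 'cV_k) (b : 'rV_k) (d : 'M_1) :
  metzler (block_mx C a b d) ->
  [/\ metzler C, forall i, 0 <= a i 0 & forall j, 0 <= b 0 j].
Proof.
move=> mM; split.
- move=> i j ij; rewrite -(block_mxEul C a b d); apply: mM.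
  by apply: contra ij => /eqP /lshift_inj ->.
- by move=> i; rewrite -(block_mxEur C a b d i 0); apply: mM; rewrite eq_lrshift.
- by move=> j; rewrite -(block_mxEdl C a b d 0 j); apply: mM; rewrite eq_rlshift.
Qed.

Lemma metzler_comparison k (M : 'M[R]_k) (v : 'cV[R]_k) :
  metzler M -> has_lyapunov_vector M -> (forall i, (M *m v) i 0 <= 0) ->
  forall i, 0 <= v i 0.
Proof.
move=> mM [u u_gt0 Mu_lt0] Mv_le0 i; rewrite leNgt; apply/negP => vi_lt0.
(* Push v up by the largest multiple of u that keeps it nonnegative; the
   coordinate where it touches 0 contradicts the sign of M u. *)
pose ratio j := v j 0 / u j 0.
have [i1 _ ratio_min] := @arg_minP _ _ _ i xpredT ratio isT.
set tau := ratio i1 in ratio_min.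
have tau_lt0 : tau < 0.
  by apply: le_lt_trans (ratio_min i isT) _; rewrite ltr_pdivrMr // mul0r.
pose w := v - tau *: u.
have w_ge0 j : 0 <= w j 0.
  by rewrite !mxE subr_ge0 -ler_pdivlMr //; apply: ratio_min.
have wi1 : w i1 0 = 0 by rewrite !mxE /tau /ratio divfK ?subrr // gt_eqF.
have Mw_ge0 : 0 <= (M *m w) i1 0.
  rewrite mxE; apply: sumr_ge0 => j _.
  have [->|ji1] := eqVneq j i1; first by rewrite wi1 mulr0.
  by apply: mulr_ge0 => //; apply: mM; rewrite eq_sym.
suff : (M *m w) i1 0 < 0 by rewrite ltNge Mw_ge0.
have -> : (M *m w) i1 0 = (M *m v) i1 0 - tau * (M *m u) i1 0.
  by rewrite /w mulmxBr -scalemxAr !mxE.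
rewrite -(subr0 (0 : R)); apply: ler_ltD (Mv_le0 i1) _.
by rewrite ltrN2 nmulr_rgt0.
Qed.

Lemma metzler_invmx_le0 k (M : 'M[R]_k) : metzler M -> has_lyapunov_vector M ->
  M \in unitmx -> forall i j, invmx M i j <= 0.
Proof.
move=> mM lyapM uM i j; rewrite -oppr_ge0.
have -> : - invmx M i j = (- invmx M *m delta_mx j (0 : 'I_1)) i 0.
  by rewrite -colE !mxE.
apply: (metzler_comparison mM lyapM) => l.
rewrite mulNmx mulmxN mulmxA mulmxV // mul1mx !mxE oppr_le0.
by case: (_ && _).
Qed.

Lemma metzler_inv_form_le0 k (C : 'M[R]_k) (a : 'cV_k) (b : 'rV_k) :
  metzler C -> has_lyapunov_vector C -> C \in unitmx ->
  (forall i, 0 <= a i 0) -> (forall j, 0 <= b 0 j) ->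
  (b *m invmx C *m a) 0 0 <= 0.
Proof.
move=> mC lyapC uC a_ge0 b_ge0; rewrite -oppr_ge0.
have -> : - (b *m invmx C *m a) 0 0 = (b *m - invmx C *m a) 0 0.
  by rewrite mulmxN mulNmx !mxE.
rewrite mxE; apply: sumr_ge0 => l _; apply: mulr_ge0 => //.
rewrite mxE; apply: sumr_ge0 => l' _; apply: mulr_ge0 => //.
by rewrite mxE oppr_ge0 metzler_invmx_le0.
Qed.

Lemma lyapunov_block k (C : 'M[R]_k) (a : 'cV_k) (b : 'rV_k) (d : 'M_1) :
  metzler (block_mx C a b d) -> has_lyapunov_vector C -> C \in unitmx ->
  schur_compl C a b d < 0 -> has_lyapunov_vector (block_mx C a b d).
Proof.
move=> mM lyapC uC s_lt0; have [mC a_ge0 b_ge0] := metzler_block_parts mM.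
have [u u_gt0 Cu_lt0] := lyapC.
(* The candidate (x + eps u; 1) with C x = - a: the first block of M applied
   to it is eps C u, and the last entry is the Schur complement plus eps b u. *)
pose x := - invmx C *m a.
have x_ge0 i : 0 <= x i 0.
  rewrite mxE; apply: sumr_ge0 => l _; apply: mulr_ge0 => //.
  by rewrite mxE oppr_ge0 metzler_invmx_le0.
set s := schur_compl C a b d in s_lt0.
pose beta := (b *m u) 0 0.
have beta_ge0 : 0 <= beta.
  rewrite /beta mxE; apply: sumr_ge0 => l _.
  by apply: mulr_ge0 => //; apply: ltW.
pose eps := - s / (beta + 1).
have eps_gt0 : 0 < eps by rewrite divr_gt0 ?oppr_gt0 // ltr_wpDl.
have eps_beta : eps * beta < - s.
  rewrite /eps mulrAC ltr_pdivrMr ?ltr_wpDl // mulrDr mulr1 ltrDl oppr_gt0 //.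
exists (col_mx (x + eps *: u) (1%:M : 'M[R]_1)).
  move=> i; rewrite -(splitK i); case: (split i) => j /=.
    rewrite col_mxEu mxE [(eps *: u) j 0]mxE.
    exact: ltr_wpDl (x_ge0 j) (mulr_gt0 eps_gt0 (u_gt0 j)).
  by rewrite col_mxEd !mxE ord1.
rewrite mul_block_col => i; rewrite -(splitK i); case: (split i) => j /=.
  rewrite col_mxEu mulmx1 mulmxDr /x mulmxA mulmxN mulmxV // mulNmx mul1mx.
  rewrite -scalemxAr addrAC addNr add0r !mxE pmulr_rlt0 //.
  by move: (Cu_lt0 j); rewrite mxE.
rewrite col_mxEd ord1 mulmxDr -scalemxAr /x mulmxA mulmxN mulNmx.
have -> : (- (b *m invmx C *m a) + eps *: (b *m u) + d *m (1%:M : 'M[R]_1)) 0 0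
   = s + eps * beta.
  by rewrite /s /schur_compl /beta !mxE big_ord1 !mxE eqxx /=; ring.
by rewrite -ltrBrDl sub0r.
Qed.

End Metzler.

Section MetzlerStability.
Variable R : rcfType.

Definition det_shift_pos k (M : 'M[R]_k) :=
  forall t, 0 <= t -> 0 < \det (t%:M - M).

Lemma hurwitz_det_shift_pos k (M : 'M[R]_k) : hurwitz M -> det_shift_pos M.
Proof.
move=> hM t t_ge0; rewrite -horner_char_poly.
have lc1 : lead_coef (char_poly M) = 1 by apply/monicP/char_poly_monic.
apply: (poly_gt0_above (c := 0)); rewrite ?lc1 ?ltr01 // => x.
rewrite in_itv andbT => x_ge0; apply/negP => rx.
have /hM : eigenvalue_C M (x%:C)%C by apply: (rmorph_root (real_complex R)).
have -> : 'Re (x%:C)%C = (x%:C)%C by apply/Creal_ReP/complex_realP; exists x.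
by rewrite ltcE /= ltNge [0 <= x]x_ge0 andbF.
Qed.

Lemma det_shift_pos_unitmx k (M : 'M[R]_k) : det_shift_pos M -> M \in unitmx.
Proof.
move=> /(_ 0 (lexx 0)); rewrite raddf0 sub0r => /lt0r_neq0.
by rewrite -unitfE -unitmxE unitmxN.
Qed.

Lemma det_shift_pos_schur k (C : 'M[R]_k) (a : 'cV_k) (b : 'rV_k) (d : 'M_1) :
  det_shift_pos C -> det_shift_pos (block_mx C a b d) ->
  schur_compl C a b d < 0.
Proof.
move=> posC /(_ 0 (lexx 0)); have uC := det_shift_pos_unitmx posC.
have := posC 0 (lexx 0); rewrite raddf0 sub0r => detNC_gt0.
rewrite det_shift_block ?raddf0 ?sub0r ?unitmxN // pmulr_rgt0 //.
by rewrite invmxN mulmxN mulNmx /schur_compl !mxE; lra.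
Qed.

Lemma det_shift_pos_ulblock k (C : 'M[R]_k) (a : 'cV_k) (b : 'rV_k) (d : 'M_1) :
  (forall N : 'M[R]_k, metzler N -> det_shift_pos N -> has_lyapunov_vector N) ->
  metzler (block_mx C a b d) -> det_shift_pos (block_mx C a b d) ->
  det_shift_pos C.
Proof.
move=> IH mM posM; have [mC a_ge0 b_ge0] := metzler_block_parts mM.
pose p := char_poly C.
have lc_gt0 : 0 < lead_coef p by rewrite (monicP (char_poly_monic C)) ltr01.
move=> t1 t1_ge0; rewrite ltNge -horner_char_poly; apply/negP => pt1_le0.
(* y is the largest real eigenvalue of C. *)
have [y t1y [/rootP py0 p_gt0]] := poly_last_root lc_gt0 pt1_le0.
have det_le t :
    y < t -> \det (t%:M - block_mx C a b d) <= p.[t] * (t - d 0 0).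
  move=> yt; have mCt := metzler_subr_scalar t mC.
  have posCt : det_shift_pos (C - t%:M).
    move=> x x_ge0; rewrite opprB addrA -raddfD -horner_char_poly.
    by apply: p_gt0; rewrite ltr_wpDl.
  have uCt := det_shift_pos_unitmx posCt.
  have := metzler_inv_form_le0 mCt (IH _ mCt posCt) uCt a_ge0 b_ge0.
  rewrite -opprB unitmxN in uCt.
  rewrite -opprB invmxN mulmxN mulNmx mxE oppr_le0.
  rewrite det_shift_block // -horner_char_poly => form_ge0.
  by rewrite ler_pM2l ?p_gt0 // lerBlDr lerDl.
pose q := char_poly (block_mx C a b d) - p * ('X - (d 0 0)%:P).
have [t yt] : exists2 t, y < t & 0 < q.[t].
  apply: poly_gt0_right; rewrite /q hornerD hornerN hornerM py0 mul0r subr0.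
  by rewrite horner_char_poly posM // (le_trans t1_ge0).
rewrite /q hornerD hornerN hornerM !hornerE horner_char_poly subr_gt0.
by rewrite ltNge det_le.
Qed.

Lemma metzler_det_shift_pos_lyapunov k (M : 'M[R]_k) :
  metzler M -> det_shift_pos M -> has_lyapunov_vector M.
Proof.
elim: k M => [|k IH] M mM posM; first by exists 0 => -[].
have e : (k + 1 = k.+1)%N by rewrite addn1.
pose M' := castmx (esym e, esym e) M.
suff : has_lyapunov_vector M'.
  by move/(transport_castmx (P := @has_lyapunov_vector R) e); rewrite castmxKV.
have mM' : metzler M' := transport_castmx (P := @metzler R) (esym e) mM.
have posM' : det_shift_pos M' :=
  transport_castmx (P := @det_shift_pos) (esym e) posM.
rewrite -(submxK M') in mM' posM' *.
have posC := det_shift_pos_ulblock IH mM' posM'.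
have [mC _ _] := metzler_block_parts mM'.
apply: lyapunov_block mM' (IH _ mC posC) (det_shift_pos_unitmx posC) _.
exact: det_shift_pos_schur.
Qed.

End MetzlerStability.

Section Gershgorin.
Variable R : rcfType.
Local Open Scope complex_scope.

Lemma eigenvalue_C_eigenrow k (M : 'M[R]_k) z : eigenvalue_C M z ->
  exists2 v : 'rV[R[i]]_k, v != 0 &
    forall i, z * v 0 i = \sum_j (M i j)%:C * v 0 j.
Proof.
move=> ev; have : eigenvalue (map_mx (real_complex R) M)^T z.
  by rewrite eigenvalue_root_char char_poly_trmx -map_char_poly.
case/eigenvalueP => v v_eig v_neq0; exists v => // i.
have := congr1 (fun w : 'rV_k => w 0 i) v_eig; rewrite !mxE => <-.
by apply: eq_bigr => j _; rewrite !mxE mulrC.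
Qed.

Lemma Re_lt0_dist (z : R[i]) (c : R) : `|z - c%:C| < - c%:C -> 'Re z < 0.
Proof.
have Rec : 'Re c%:C = c%:C by apply/Creal_ReP/complex_realP; exists c.
move/(le_lt_trans (leif_Re_Creal _).1).
by rewrite raddfB /= Rec ltrBlDr addNr.
Qed.

Lemma metzler_lyapunov_hurwitz k (M : 'M[R]_k) :
  metzler M -> has_lyapunov_vector M -> hurwitz M.
Proof.
move=> mM [u u_gt0 Mu_lt0] z /eigenvalue_C_eigenrow [v v_neq0 v_eig].
pose U j := (u j 0)%:C; pose c i j := (M i j)%:C.
have U_gt0 j : 0 < U j by rewrite ltcE /= eqxx u_gt0.
pose y j := `|v 0 j| / U j.
have vU j : `|v 0 j| = y j * U j by rewrite /y divfK // gt_eqF.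
have y_real j : y j \is Num.real.
  by rewrite /y realM ?normr_real // realV; apply: gtr0_real.
have [j0 vj0] : exists j, v 0 j != 0.
  apply/existsP; apply: contraR v_neq0 => /existsPn v0; apply/eqP/matrixP => a j.
  by rewrite ord1 mxE; apply/eqP; move: (v0 j); rewrite negbK.
(* Gershgorin's argument in the row i where |v_j| / u_j is largest. *)
have [i _ y_max] := @real_arg_maxP _ _ j0 xpredT y isT (fun j _ => y_real j).
have y_gt0 : 0 < y i.
  by apply: lt_le_trans (y_max j0 isT); rewrite /y divr_gt0 ?normr_gt0.
have off_diag : `|z - c i i| * `|v 0 i| <= y i * \sum_(j | j != i) c i j * U j.
  rewrite -normrM mulrBl v_eig (bigD1 i) //= addrAC subrr add0r mulr_sumr.
  apply: le_trans (ler_norm_sum _ _ _) _; apply: ler_sum => j ji.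
  have c_ge0 : 0 <= c i j by rewrite ler0c; apply: mM; rewrite eq_sym.
  rewrite normrM vU ger0_norm // mulrCA.
  by apply: ler_wpM2r; [apply: mulr_ge0 c_ge0 (ltW (U_gt0 j)) | apply: y_max].
have row_sum : \sum_(j | j != i) c i j * U j < - (c i i * U i).
  have : \sum_j c i j * U j = ((M *m u) i 0)%:C.
    by rewrite mxE rmorph_sum; apply: eq_bigr => j _; rewrite rmorphM.
  rewrite (bigD1 i) //= => Mu_i; rewrite -subr_lt0 opprK addrC Mu_i.
  by rewrite ltcE /= eqxx Mu_lt0.
apply: (Re_lt0_dist (c := M i i)); rewrite -/(c i i).
rewrite vU in off_diag; rewrite -(ltr_pM2r (mulr_gt0 y_gt0 (U_gt0 i))).
apply: le_lt_trans off_diag _.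
by rewrite mulNr mulrCA -mulrN ltr_pM2l // -mulNr.
Qed.

End Gershgorin.

Lemma metzler_hurwitz_lyapunov (R : rcfType) k (M : 'M[R]_k) :
  metzler M -> hurwitz M -> has_lyapunov_vector M.
Proof.
by move=> mM /hurwitz_det_shift_pos; apply: metzler_det_shift_pos_lyapunov.
Qed.

Lemma metzler_block_hurwitz (R : rcfType) k
    (C : 'M[R]_k) (a : 'cV_k) (b : 'rV_k) (d : 'M_1) :
  metzler (block_mx C a b d) -> hurwitz C ->
  hurwitz (block_mx C a b d) <-> schur_compl C a b d < 0.
Proof.
move=> mM hC; have posC := hurwitz_det_shift_pos hC.
have [mC _ _] := metzler_block_parts mM.
split=> [/hurwitz_det_shift_pos | s_lt0]; first exact: det_shift_pos_schur.
apply: metzler_lyapunov_hurwitz mM (lyapunov_block mM _ _ s_lt0).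
  exact: metzler_hurwitz_lyapunov.
exact: det_shift_pos_unitmx.
Qed.

Section LastCoordinate.
Variables (R : rcfType) (m : nat).
Local Notation en := (e_last R m).
Implicit Type X : 'M[R]_m.+1.

Definition split_last X : 'M[R]_(m + 1) :=
  castmx (esym (addn1 m), esym (addn1 m)) X.

Lemma split_lastE X i j :
  split_last X i j = X (cast_ord (addn1 m) i) (cast_ord (addn1 m) j).
Proof. by rewrite castmxE; congr (X _ _); apply: val_inj. Qed.

Lemma metzler_split_last X : metzler X -> metzler (split_last X).
Proof. exact: (transport_castmx (P := @metzler R)). Qed.

Lemma hurwitz_split_last X : hurwitz (split_last X) <-> hurwitz X.
Proof.
split; last exact: (transport_castmx (P := @hurwitz R)).
by move/(transport_castmx (P := @hurwitz R) (addn1 m)); rewrite castmxKV.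
Qed.

Lemma e_last_form X : (en^T *m X *m en) 0 0 = X ord_max ord_max.
Proof. by rewrite trmx_delta -rowE -colE !mxE. Qed.

Lemma ulsubmx_split_last X :
  ulsubmx (split_last X) = (Smx R m)^T *m X *m Smx R m.
Proof.
apply/matrixP => i j; rewrite 2![LHS]mxE split_lastE.
rewrite mxE (bigD1 (widen_ord (leqnSn m) j)) //= big1 ?addr0; last first.
  by move=> l /negPf lj; rewrite [Smx R m l j]mxE lj mulr0.
rewrite [Smx R m _ j]mxE eqxx mulr1 mxE (bigD1 (widen_ord (leqnSn m) i)) //=.
rewrite big1 ?addr0; last by move=> l /negPf li; rewrite !mxE li mul0r.
by rewrite !mxE eqxx mul1r; congr (X _ _); apply: val_inj.
Qed.

Lemma drsubmx_split_last X : drsubmx (split_last X) 0 0 = X ord_max ord_max.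
Proof.
by rewrite !mxE split_lastE; congr (X _ _); apply: val_inj; rewrite /= addn0.
Qed.

Lemma split_last_sub_e_last X c :
  let Y := split_last X in
  split_last (X - c *: (en *m en^T)) =
  block_mx (ulsubmx Y) (ursubmx Y) (dlsubmx Y) (drsubmx Y - c%:M).
Proof.
have enE : en *m en^T = delta_mx ord_max ord_max.
  by rewrite /e_last trmx_delta mul_delta_mx.
have lshift_max i : (cast_ord (addn1 m) (lshift 1 i) == ord_max) = false.
  by apply/negbTE; rewrite -val_eqE /= neq_ltn ltn_ord.
have rshift_max i : cast_ord (addn1 m) (rshift m i) == ord_max.
  by rewrite -val_eqE /= ord1 addn0.
apply/matrixP => i j; rewrite -(splitK i) -(splitK j).
case: (split i) => i'; case: (split j) => j' /=;
  rewrite ?block_mxEul ?block_mxEur ?block_mxEdl ?block_mxEdr !mxE;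
  rewrite !split_lastE enE !mxE.
- by rewrite lshift_max mulr0 subr0.
- by rewrite lshift_max mulr0 subr0.
- by rewrite lshift_max andbF mulr0 subr0.
- by rewrite !rshift_max !ord1 mulr1 mulr1n.
Qed.

Lemma metzler_sub_e_last X c : metzler X -> metzler (X - c *: (en *m en^T)).
Proof.
move=> mX i j ij; rewrite /e_last trmx_delta mul_delta_mx !mxE.
have -> : (i == ord_max) && (j == ord_max) = false.
  by apply/negbTE; apply: contra ij => /andP[/eqP -> /eqP ->].
by rewrite mulr0 subr0; apply: mX.
Qed.

Lemma invmx_e_last X : X \in unitmx -> ulsubmx (split_last X) \in unitmx ->
  let Y := split_last X in
  (en^T *m invmx X *m en) 0 0 =
  (schur_compl (ulsubmx Y) (ursubmx Y) (dlsubmx Y) (drsubmx Y))^-1.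
Proof.
move=> uX uC Y; set s := schur_compl _ _ _ _.
have detX : \det X = \det (ulsubmx Y) * s.
  by rewrite -det_block_schur // submxK det_castmx.
have minor : row' ord_max (col' ord_max X) = ulsubmx Y.
  apply/matrixP => i j; rewrite !mxE split_lastE; congr (X _ _); apply: val_inj;
  by rewrite /= /bump leqNgt ltn_ord.
rewrite e_last_form /invmx uX !mxE /cofactor minor addnn -signr_odd odd_double.
by rewrite expr0 mul1r detX invfM mulrAC mulVf ?mul1r // -unitfE -unitmxE.
Qed.

End LastCoordinate.

Theorem mainTheorem12 (R : rcfType) (m : nat) (hm : (1 <= m)%N)
  (A : 'M[R]_m.+1) (b0 : 'cV[R]_m.+1) (r : R) :
  metzler A -> output_unstable A -> A \in unitmx ->
  (forall i, 0 <= b0 i 0) -> 0 < r ->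
  let en := e_last R m in
  let g0 := - ((en^T *m invmx A *m b0) 0 0) in
  let gn := - ((en^T *m invmx A *m en) 0 0) in
  let ustar := (g0 - r) / (gn * r) in
  (hurwitz (A - ustar *: (en *m en^T)) <-> g0 < 0).
Proof.
move=> mA [hS Ann_gt0] uA _ r_gt0 en g0 gn ustar.
set Y := split_last A; set C := ulsubmx Y; set a := ursubmx Y.
set b := dlsubmx Y; set d := drsubmx Y.
have mY : metzler (block_mx C a b d) by rewrite submxK; apply: metzler_split_last.
have [mC a_ge0 b_ge0] := metzler_block_parts mY.
have hC : hurwitz C by rewrite /C ulsubmx_split_last.
have uC := det_shift_pos_unitmx (hurwitz_det_shift_pos hC).
set s := schur_compl C a b d.
have s_gt0 : 0 < s.
  have lyapC := metzler_hurwitz_lyapunov mC hC.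
  have := metzler_inv_form_le0 mC lyapC uC a_ge0 b_ge0.
  move: Ann_gt0; rewrite e_last_form -drsubmx_split_last -/Y -/d.
  by rewrite /s /schur_compl !mxE; lra.
have gnE : gn = - s^-1 by rewrite /gn invmx_e_last.
have schur_bar : schur_compl C a b (d - ustar%:M) = s * g0 / r.
  by rewrite schur_compl_subr -/s /ustar gnE; field; rewrite !gt_eqF.
rewrite -hurwitz_split_last split_last_sub_e_last metzler_block_hurwitz //.
- by rewrite schur_bar -mulrA pmulr_rlt0 // pmulr_llt0 ?invr_gt0.
- by rewrite -split_last_sub_e_last; apply/metzler_split_last/metzler_sub_e_last.
Qed.
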